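(* Let $s$ be a positive integer, $S$ a linear subspace of $\mathbb{R}^s$, $b\in\mathbb{R}^s_{>0}$, and $z\in S+b$ with $z\in\mathbb{R}^s_{\ge0}$. Let $\alpha\in\{0,1\}^s$ be given by $\alpha_i=1$ if $z_i>0$ and $\alpha_i=0$ otherwise. Then $(\alpha+S)\cap\mathbb{R}^s_{\ge0}$ intersects $\mathbb{R}^s_{>0}$. *)

From HB Require Import structures.
From mathcomp Require Import all_boot all_order all_algebra.
From mathcomp Require Import reals.
Set Implicit Arguments. Unset Strict Implicit. Unset Printing Implicit Defensive.
Import Order.TTheory GRing.Theory Num.Theory.
Local Open Scope ring_scope.

Definition supp_ind (R : realType) (s : nat) (z : 'rV[R]_s) : 'rV[R]_s :=
  \row_i (if 0 < z 0 i then 1 else 0).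

From HB Require Import structures.
From mathcomp Require Import all_boot all_order all_algebra.
From mathcomp Require Import reals.
From mathcomp Require Import lra.
Import Order.TTheory GRing.Theory Num.Theory.
Local Open Scope ring_scope.

(* The witness is y = alpha + t (b - z) for a small t > 0: y - alpha is a
   multiple of z - b, hence in S.  Where z_i = 0 we get y_i = t b_i > 0, and
   where z_i > 0 we get y_i = 1 - t z_i + t b_i > 0 as soon as t z_i < 1;
   t = 1 / (1 + sum_j z_j) works for every i at once. *)

Lemma ler_entry_sum_ge0 {R : numDomainType} {m n : nat} (A : 'M[R]_(m, n))
    (i : 'I_m) (j : 'I_n) :
  (forall k, 0 <= A i k) -> A i j <= \sum_k A i k.
Proof.
move=> A_ge0; rewrite (bigD1 j) //= lerDl.
exact: sumr_ge0.
Qed.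

Lemma exists_small_scale_row {R : realFieldType} {n : nat} (v : 'rV[R]_n) :
  (forall i, 0 <= v 0 i) -> exists2 t : R, 0 < t & forall i, t * v 0 i < 1.
Proof.
move=> v_ge0; set M := \sum_k v 0 k.
have M_ge0 : 0 <= M by apply: sumr_ge0.
exists (1 + M)^-1 => [|i]; first by rewrite invr_gt0; lra.
rewrite mulrC ltr_pdivrMr; last lra.
have := ler_entry_sum_ge0 v 0 i v_ge0; rewrite -/M; lra.
Qed.

Lemma indicator_add_scale_gt0 {R : realFieldType} (t x c : R) :
  0 < t -> 0 <= x -> 0 < c -> t * x < 1 ->
  0 < (if 0 < x then 1 else 0) + t * (c - x).
Proof.
move=> t_gt0 x_ge0 c_gt0 tx_lt1.
have tc_gt0 : 0 < t * c by exact: mulr_gt0.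
case: ifP => [_ | x_le0]; first by rewrite mulrDr mulrN; lra.
have -> : x = 0 by apply/eqP; rewrite eq_le x_ge0 andbT leNgt x_le0.
by rewrite subr0 add0r.
Qed.

Lemma memv_scale_subr {K : fieldType} {vT : vectType K} (U : {vspace vT})
    (t : K) (u v : vT) :
  u - v \in U -> t *: (v - u) \in U.
Proof. by move=> uv_in; rewrite -opprB scalerN -scaleNr memvZ. Qed.

Theorem lemma4p5 (R : realType) (s : nat) (hs : (0 < s)%N)
  (S : {vspace 'rV[R]_s}) (b z : 'rV[R]_s)
  (hb : forall i, 0 < b 0 i)
  (hzS : z - b \in S)
  (hz0 : forall i, 0 <= z 0 i) :
  exists y : 'rV[R]_s,
    [/\ y - supp_ind z \in S, (forall i, 0 <= y 0 i) & (forall i, 0 < y 0 i)].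
Proof.
have [t t_gt0 tz_lt1] := exists_small_scale_row z hz0.
set y := supp_ind z + t *: (b - z).
have y_gt0 : forall i, 0 < y 0 i.
  by move=> i; rewrite !mxE; apply: indicator_add_scale_gt0.
exists y; split=> [|i|//]; last exact/ltW.
by rewrite /y addrC addKr; apply: memv_scale_subr.
Qed.
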